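(* Let $M,K\ge1$, $\mathbf{H}=[\mathbf{h}_{:1},\dots,\mathbf{h}_{:K}]\in\mathbb{C}^{M\times K}$, $P>0$, $N_0>0$, and suppose all users transmit at the same rate, $r_k=r_G$ for all $k\in\{1,\dots,K\}$. Consider the successive interference cancellation (SIC) decoding order $i_1\to i_2\to\cdots\to i_K$ constructed greedily as follows: for $u=1,\dots,K$, with $U_u=\{1,\dots,K\}\setminus\{i_1,\dots,i_{u-1}\}$ the set of not-yet-decoded users, choose $i_u\in U_u$ maximizing the signal-to-interference-plus-noise rate $R_{k}^{U_u\setminus\{k\}}$ over $k\in U_u$ (i.e., decode the user with the highest SINR at each step). Then this decoding order maximizes $|S^*_{\mathrm{SIC}}|$ over all permutations of $\{1,\dots,K\}$.
   Context: For a set $A\subseteq\{1,\dots,K\}$, $\mathbf{H}_{:A}$ is the submatrix of $\mathbf{H}$ with columns $\{\mathbf{h}_{:k}:k\in A\}$ (zero contribution if $A=\emptyset$); $\mathrm H$ denotes conjugate transpose. For a user $x$ and set $Y$, $R_x^{Y}=\log_2\det\big(\mathbf{I}_M+\frac{P}{N_0}\mathbf{h}_{:x}\mathbf{h}_{:x}^{\mathrm H}(\mathbf{I}_M+\frac{P}{N_0}\mathbf{H}_{:Y}\mathbf{H}_{:Y}^{\mathrm H})^{-1}\big)$. For a decoding order (permutation) $i_1\to\cdots\to i_K$, let $T_u=\{i_k:k>u\}$ and define $S^*_{\mathrm{SIC}}=\{i_1,\dots,i_{u^*-1}\}$ where $u^*$ is the smallest $u\in\{1,\dots,K\}$ with $r_{i_u}>R_{i_u}^{T_u}$,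 and $u^*=K+1$ if no such $u$ exists. Thus $S^*_{\mathrm{SIC}}$ is the set of users successfully decoded by SIC in that order before the first failure. The setting is a Gaussian multiple-access channel $\mathbf{y}=\mathbf{H}\mathbf{x}+\mathbf{z}$ with $K$ single-antenna transmitters of power $P$, an $M$-antenna receiver, and noise $\mathcal{CN}(0,N_0\mathbf{I}_M)$. *)

From HB Require Import structures.
From mathcomp Require Import all_boot all_order all_fingroup all_algebra.
From mathcomp Require Import reals exp.
From mathcomp.real_closed Require Import complex.

Set Implicit Arguments.
Unset Strict Implicit.
Unset Printing Implicit Defensive.

Import Order.TTheory GRing.Theory Num.Theory.
Local Open Scope ring_scope.

Section SIC.
Variables (R : realType) (M K : nat).

Definition ctr m n (A : 'M[R[i]]_(m, n)) : 'M[R[i]]_(n, m) :=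
  map_mx (@conjc R) A^T.

Definition log2 (x : R) : R := ln x / ln 2.

(* H_{:Y} H_{:Y}^H = sum over k in Y of h_{:k} h_{:k}^H (0 if Y is empty) *)
Definition gramY (H : 'M[R[i]]_(M, K)) (Y : {set 'I_K}) : 'M[R[i]]_M :=
  \sum_(k in Y) (col k H *m ctr (col k H)).

(* R_x^Y = log2 det (I + P/N0 h_x h_x^H (I + P/N0 H_Y H_Y^H)^{-1}).
   The determinant is real (and >= 1); we take its real part. *)
Definition rateSINR (H : 'M[R[i]]_(M, K)) (P N0 : R) (x : 'I_K)
    (Y : {set 'I_K}) : R :=
  let c : R[i] := ((P / N0)%:C)%C in
  log2 (complex.Re (\det (1%:M + c *: (col x H *m ctr (col x H))
                    *m invmx (1%:M + c *: gramY H Y)))).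

(* decoding order s : i_{u+1} = s u  (0-indexed positions u : 'I_K) *)
Definition Tset (s : 'S_K) (u : 'I_K) : {set 'I_K} :=
  [set s v | v in [set v : 'I_K | (u < v)%N]].

Definition Uset (s : 'S_K) (u : 'I_K) : {set 'I_K} :=
  [set: 'I_K] :\: [set s v | v in [set v : 'I_K | (v < u)%N]].

Definition sic_ok (H : 'M[R[i]]_(M, K)) (P N0 : R) (r : 'I_K -> R)
    (s : 'S_K) (u : 'I_K) : bool :=
  r (s u) <= rateSINR H P N0 (s u) (Tset s u).

(* 0-indexed position of the first failure (= u^* - 1), K if none *)
Definition first_fail (H : 'M[R[i]]_(M, K)) (P N0 : R) (r : 'I_K -> R)
    (s : 'S_K) : nat :=
  find (fun u => ~~ sic_ok H P N0 r s u) (enum 'I_K).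

Definition S_SIC (H : 'M[R[i]]_(M, K)) (P N0 : R) (r : 'I_K -> R)
    (s : 'S_K) : {set 'I_K} :=
  [set s u | u in [set u : 'I_K | (u < first_fail H P N0 r s)%N]].

Definition greedy_order (H : 'M[R[i]]_(M, K)) (P N0 : R) (s : 'S_K) : Prop :=
  forall u : 'I_K, forall k : 'I_K, k \in Uset s u ->
    rateSINR H P N0 k (Uset s u :\ k)
      <= rateSINR H P N0 (s u) (Uset s u :\ s u).

End SIC.

(* With a common target rate [rG], decoding user [k] against the set [Y] of
   still undecoded users succeeds iff [R_k^Y >= rG], and [R_k^Y] decreases as
   [Y] grows: by the rank-one determinant identity it equals
   [log2 (1 + c h_k^H (I + c H_Y H_Y^H)^-1 h_k)], and inversion reverses the
   Loewner order.  Suppose the greedy order first fails at step [u] while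
   another order [s'] decodes more than [u] users.  Some user among the first
   [u + 1] of [s'] is not among the [u] users decoded greedily; the first such
   user [k] is decoded by [s'] against a subset of the users the greedy order
   has left, so [k] would have succeeded at step [u], and hence so would the
   greedy choice, which has the largest rate there. *)

From HB Require Import structures.
From mathcomp Require Import all_boot all_order all_fingroup all_algebra.
From mathcomp Require Import reals exp.
From mathcomp.real_closed Require Import complex.
Import Order.TTheory GRing.Theory Num.Theory.
Local Open Scope ring_scope.
Set Implicit Arguments.
Unset Strict Implicit.
Unset Printing Implicit Defensive.

Lemma det1D_rank1 (T : comPzRingType) n (u : 'cV[T]_n) (v : 'rV[T]_n) :
  \det (1%:M + u *m v) = 1 + (v *m u) 0 0.
Proof.
pose N := block_mx (1%:M : 'M[T]_n) u (-v) (1%:M : 'M[T]_1).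
have N_lu : N = block_mx 1%:M 0 (-v) 1%:M *m block_mx 1%:M u 0 (1%:M + v *m u).
  rewrite mulmx_block; congr block_mx.
  - by rewrite mulmx1 mul0mx addr0.
  - by rewrite mul1mx mul0mx addr0.
  - by rewrite mulmx1 mul1mx addr0.
  - by rewrite mul1mx mulNmx addrC addrK.
have N_ul : N = block_mx (1%:M + u *m v) u 0 1%:M *m block_mx 1%:M 0 (-v) 1%:M.
  rewrite mulmx_block; congr block_mx.
  - by rewrite mulmx1 mulmxN addrK.
  - by rewrite mulmx0 add0r mulmx1.
  - by rewrite mul0mx add0r mul1mx.
  - by rewrite mul0mx add0r mul1mx.
have det_vu : \det N = \det (1%:M + v *m u).
  by rewrite N_lu det_mulmx det_lblock det_ublock !det1 !mul1r.
have det_uv : \det N = \det (1%:M + u *m v).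
  by rewrite N_ul det_mulmx det_ublock det_lblock !det1 !mulr1.
by rewrite -det_uv det_vu det_mx11 !mxE eqxx.
Qed.

Section HermitianForms.
Variable R : realType.
Local Notation C := R[i].

Lemma ctrM m n p (A : 'M[C]_(m, n)) (B : 'M[C]_(n, p)) :
  ctr (A *m B) = ctr B *m ctr A.
Proof. by rewrite /ctr trmx_mul map_mxM. Qed.

Lemma ctrK m n (A : 'M[C]_(m, n)) : ctr (ctr A) = A.
Proof. by apply/matrixP => i j; rewrite !mxE conjcK. Qed.

Lemma ctr0 m n : ctr (0 : 'M[C]_(m, n)) = 0.
Proof. by rewrite /ctr trmx0 map_mx0. Qed.

Lemma ctrD m n (A B : 'M[C]_(m, n)) : ctr (A + B) = ctr A + ctr B.
Proof. by rewrite /ctr linearD map_mxD. Qed.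

Lemma ctrB m n (A B : 'M[C]_(m, n)) : ctr (A - B) = ctr A - ctr B.
Proof. by rewrite /ctr linearB map_mxB. Qed.

Lemma ctr1 n : ctr (1%:M : 'M[C]_n) = 1%:M.
Proof. by rewrite /ctr trmx1 map_mx1. Qed.

Lemma ctrZ_real m n (a : R) (A : 'M[C]_(m, n)) :
  ctr (a%:C%C *: A) = a%:C%C *: ctr A.
Proof. by rewrite /ctr linearZ map_mxZ /= oppr0. Qed.

Lemma ctr_sum n (I : finType) (P : pred I) (F : I -> 'M[C]_n) :
  ctr (\sum_(i | P i) F i) = \sum_(i | P i) ctr (F i).
Proof. exact: (big_morph _ (@ctrD n n) (ctr0 n n)). Qed.

Definition sform n (A : 'M[C]_n) (x y : 'cV[C]_n) : C := (ctr x *m A *m y) 0 0.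

Definition qform n (A : 'M[C]_n) (x : 'cV[C]_n) : C := sform A x x.

Lemma qform0 n (x : 'cV[C]_n) : qform 0 x = 0.
Proof. by rewrite /qform /sform mulmx0 mul0mx mxE. Qed.

Lemma qformD n (A B : 'M[C]_n) x : qform (A + B) x = qform A x + qform B x.
Proof. by rewrite /qform /sform mulmxDr mulmxDl mxE. Qed.

Lemma qformZ n a (A : 'M[C]_n) x : qform (a *: A) x = a * qform A x.
Proof. by rewrite /qform /sform -scalemxAr -scalemxAl mxE. Qed.

Lemma qform_sum n (I : finType) (P : pred I) (F : I -> 'M[C]_n) x :
  qform (\sum_(i | P i) F i) x = \sum_(i | P i) qform (F i) x.
Proof. by elim/big_rec2: _ => [|i B b _ <-]; rewrite ?qform0 ?qformD. Qed.

Lemma sformBl n (A : 'M[C]_n) x y z :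
  sform A (x - y) z = sform A x z - sform A y z.
Proof. by rewrite /sform ctrB !mulmxBl mxE [X in _ + X]mxE. Qed.

Lemma sformBr n (A : 'M[C]_n) x y z :
  sform A x (y - z) = sform A x y - sform A x z.
Proof. by rewrite /sform mulmxBr mxE [X in _ + X]mxE. Qed.

Lemma qformB n (A : 'M[C]_n) x y :
  qform A (x - y) = qform A x - sform A x y - sform A y x + qform A y.
Proof. by rewrite /qform sformBl !sformBr opprB addrA addrAC. Qed.

Lemma qform1_ge0 n (x : 'cV[C]_n) : 0 <= qform 1%:M x.
Proof.
rewrite /qform /sform mulmx1 mxE; apply: sumr_ge0 => i _.
by rewrite !mxE mulrC mulcJ_ge0.
Qed.

Lemma qform1_eq0 n (x : 'cV[C]_n) : qform 1%:M x = 0 -> x = 0.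
Proof.
rewrite /qform /sform mulmx1 mxE => /eqP; rewrite psumr_eq0; last first.
  by move=> i _; rewrite !mxE mulrC mulcJ_ge0.
move=> /allP x0; apply/matrixP => i j; rewrite (ord1 j) mxE.
by have := x0 i (mem_index_enum i); rewrite !mxE mulf_eq0 conjc_eq0 orbb => /eqP.
Qed.

Lemma qform_rank1_ge0 n (g x : 'cV[C]_n) : 0 <= qform (g *m ctr g) x.
Proof.
rewrite /qform /sform !mulmxA -(mulmxA _ (ctr g)) mxE big_ord1.
rewrite -[ctr x *m g]ctrK ctrM ctrK [(ctr _) 0 0]mxE [_^T _ _]mxE mulrC.
exact: mulcJ_ge0.
Qed.

Lemma unitmx_qform_ge1 n (A : 'M[C]_n) :
  (forall x, qform 1%:M x <= qform A x) -> A \in unitmx.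
Proof.
move=> A_ge1; rewrite unitmxE unitfE; apply/negP => /det0P [v v_neq0 vA0].
have : qform 1%:M (ctr v) = 0.
  apply/eqP; rewrite eq_le qform1_ge0 andbT.
  by rewrite (le_trans (A_ge1 _)) // /qform /sform ctrK vA0 mul0mx mxE.
move/qform1_eq0/(congr1 (@ctr R _ _)); rewrite ctrK ctr0 => v0.
by rewrite v0 eqxx in v_neq0.
Qed.

Section Inverse.
Variables (n : nat) (A : 'M[C]_n).
Hypotheses (A_herm : ctr A = A) (A_unit : A \in unitmx).

Lemma ctr_invmx_mul p (h : 'M[C]_(n, p)) : ctr (invmx A *m h) *m A = ctr h.
Proof. by rewrite -{2}A_herm -ctrM mulKVmx. Qed.

Lemma sform_invmx_mul (h y : 'cV[C]_n) :
  sform A (invmx A *m h) y = (ctr h *m y) 0 0.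
Proof. by rewrite /sform ctr_invmx_mul. Qed.

Lemma sform_mul_invmx (x h : 'cV[C]_n) :
  sform A x (invmx A *m h) = (ctr x *m h) 0 0.
Proof. by rewrite /sform -mulmxA mulKVmx. Qed.

Lemma qform_invmx (h : 'cV[C]_n) : qform (invmx A) h = qform A (invmx A *m h).
Proof. by rewrite /qform sform_invmx_mul /sform mulmxA. Qed.

Lemma qform_invmx_ge0 (h : 'cV[C]_n) :
  (forall x, 0 <= qform A x) -> 0 <= qform (invmx A) h.
Proof. by move=> A_ge0; rewrite qform_invmx. Qed.

End Inverse.

(* Expand [0 <= (y - y')^H A (y - y')] for [y = A^-1 h] and [y' = B^-1 h]. *)
Lemma qform_invmx_antitone n (A B : 'M[C]_n) (h : 'cV[C]_n) :
  ctr A = A -> ctr B = B -> A \in unitmx -> B \in unitmx ->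
  (forall x, 0 <= qform A x) -> (forall x, qform A x <= qform B x) ->
  qform (invmx B) h <= qform (invmx A) h.
Proof.
move=> A_herm B_herm A_unit B_unit A_ge0 A_le_B.
have yy' : sform A (invmx A *m h) (invmx B *m h) = qform (invmx B) h.
  by rewrite sform_invmx_mul // mulmxA.
have y'y : sform A (invmx B *m h) (invmx A *m h) = qform (invmx B) h.
  by rewrite sform_mul_invmx // qform_invmx // /qform sform_mul_invmx.
have := A_ge0 (invmx A *m h - invmx B *m h).
rewrite qformB yy' y'y -qform_invmx // => ge0.
rewrite -subr_ge0 (le_trans ge0) // -[X in _ <= X](subrK (qform (invmx B) h)).
by rewrite lerD2l qform_invmx.
Qed.

End HermitianForms.

Section InterferenceCovariance.
Variables (R : realType) (M K : nat) (H : 'M[R[i]]_(M, K)).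

Definition interference_mx (c : R) (Y : {set 'I_K}) : 'M[R[i]]_M :=
  1%:M + c%:C%C *: gramY H Y.

Lemma interference_mx0 c : interference_mx c set0 = 1%:M.
Proof. by rewrite /interference_mx /gramY big_set0 scaler0 addr0. Qed.

Lemma ctr_interference_mx c Y : ctr (interference_mx c Y) = interference_mx c Y.
Proof.
rewrite /interference_mx ctrD ctr1 ctrZ_real /gramY ctr_sum.
by congr (_ + _ *: _); apply: eq_bigr => k _; rewrite ctrM ctrK.
Qed.

Lemma qform_interference_mx_subset c (Y Y' : {set 'I_K}) x : 0 <= c ->
  Y \subset Y' ->
  qform (interference_mx c Y) x <= qform (interference_mx c Y') x.
Proof.
move=> c_ge0 sYY'; rewrite !qformD !qformZ lerD2l ler_wpM2l ?ler0c //.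
rewrite /gramY !qform_sum [X in _ <= X](big_setID Y) /= (setIidPr sYY') lerDl.
by apply: sumr_ge0 => k _; apply: qform_rank1_ge0.
Qed.

Lemma qform_interference_mx_ge1 c Y x : 0 <= c ->
  qform 1%:M x <= qform (interference_mx c Y) x.
Proof.
move=> c_ge0.
by rewrite -(interference_mx0 c) qform_interference_mx_subset ?sub0set.
Qed.

Lemma interference_mx_unit c Y : 0 <= c -> interference_mx c Y \in unitmx.
Proof.
by move=> c_ge0; apply: unitmx_qform_ge1 => x; apply: qform_interference_mx_ge1.
Qed.

Lemma rateSINR_qform P N0 x Y : rateSINR H P N0 x Y =
  log2 (1 + P / N0 *
    complex.Re (qform (invmx (interference_mx (P / N0) Y)) (col x H))).
Proof.
rewrite /rateSINR -/(interference_mx _ _) -scalemxAl -mulmxA scalemxAr.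
rewrite det1D_rank1 -scalemxAl mxE.
rewrite -/(sform _ _ _) -/(qform _ _).
by case: (qform _ _) => a b /=; rewrite mul0r subr0.
Qed.

Lemma le_log2_1DM (c a b : R) : 0 <= c -> 0 <= a -> a <= b ->
  log2 (1 + c * a) <= log2 (1 + c * b).
Proof.
move=> c_ge0 a_ge0 le_ab.
have ca_gt0 : 0 < 1 + c * a by rewrite ltr_pwDl ?mulr_ge0.
rewrite /log2 ler_pM2r ?invr_gt0 ?ln_gt0 ?ltr1n // ler_ln ?posrE //.
  by rewrite lerD2l ler_wpM2l.
by rewrite (lt_le_trans ca_gt0) // lerD2l ler_wpM2l.
Qed.

Lemma rateSINR_antitone P N0 x (Y Y' : {set 'I_K}) : 0 < P -> 0 < N0 ->
  Y \subset Y' -> rateSINR H P N0 x Y' <= rateSINR H P N0 x Y.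
Proof.
move=> P_gt0 N0_gt0 sYY'; have c_ge0 : 0 <= P / N0 by rewrite ltW ?divr_gt0.
have herm := ctr_interference_mx (P / N0).
have unit Z := interference_mx_unit Z c_ge0.
have ge0 Z z : 0 <= qform (interference_mx (P / N0) Z) z.
  exact: le_trans (qform1_ge0 z) (qform_interference_mx_ge1 Z z c_ge0).
have := qform_invmx_antitone (col x H) (herm Y) (herm Y') (unit Y) (unit Y')
  (ge0 Y) (fun z => qform_interference_mx_subset z c_ge0 sYY').
have := qform_invmx_ge0 (herm Y') (unit Y') (col x H) (ge0 Y').
rewrite !lecE !rateSINR_qform => /andP [_ /= q_ge0] /andP [_ le_q].
by apply: le_log2_1DM; [exact: c_ge0 | exact: q_ge0 | exact: le_q].
Qed.

End InterferenceCovariance.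

Section DecodingOrders.
Variable K : nat.
Implicit Types (s : 'S_K) (u : 'I_K).

Lemma Tset_Uset s u : Tset s u = Uset s u :\ s u.
Proof.
apply/setP => w; rewrite -(permKV s w); set v := (s^-1)%g w.
rewrite !inE !mem_imset ?inE; try exact: perm_inj.
by rewrite (inj_eq perm_inj) ltn_neqAle -leqNgt eq_sym andbT.
Qed.

Lemma setC_Uset s u :
  ~: Uset s u = [set s v | v in [set v : 'I_K | (v < u)%N]].
Proof. by rewrite /Uset setDE setCI setCT setCK set0U. Qed.

Lemma card_decoded_lt s s' u :
  (#|~: Uset s u| < #|[set s' v | v in [set v : 'I_K | (v <= u)%N]]|)%N.
Proof.
rewrite setC_Uset !card_imset; try exact: perm_inj.
apply/proper_card/properP; split; last by exists u; rewrite !inE ?ltnn.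
by apply/subsetP => v; rewrite !inE => /ltnW.
Qed.

Lemma first_undecoded s s' u :
  exists l : 'I_K,
    [/\ (l <= u)%N, s' l \in Uset s u & Uset s u \subset Uset s' l].
Proof.
have [l0 l0P] : exists l0 : 'I_K, (l0 <= u)%N && (s' l0 \in Uset s u).
  have /subsetPn [_ /imsetP [l0 l0_le ->] l0_undecoded] :
      ~~ ([set s' v | v in [set v : 'I_K | (v <= u)%N]] \subset ~: Uset s u).
    apply: contraTN (card_decoded_lt s s' u) => /subset_leq_card.
    by rewrite leqNgt.
  by exists l0; move: l0_le l0_undecoded; rewrite inE in_setC negbK => -> ->.
pose P (l : 'I_K) := (l <= u)%N && (s' l \in Uset s u).
case: (@arg_minnP _ l0 P val l0P) => l /andP [l_le l_new] l_min.
exists l; split => //; apply/subsetP => w w_new; rewrite /Uset !inE andbT.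
apply/imsetP => -[v]; rewrite inE => lt_vl w_eq.
have := l_min v; rewrite /P -w_eq w_new (leq_trans (ltnW lt_vl) l_le).
by rewrite leqNgt lt_vl => /(_ isT).
Qed.

Lemma leq_card_decoded s s' (a b : nat) : (a <= b)%N ->
  (#|[set s' v | v in [set v : 'I_K | (v < a)%N]]|
     <= #|[set s v | v in [set v : 'I_K | (v < b)%N]]|)%N.
Proof.
move=> le_ab; rewrite !card_imset; try exact: perm_inj.
by apply/subset_leq_card/subsetP => v; rewrite !inE => /leq_trans; apply.
Qed.

End DecodingOrders.

Section GreedySIC.
Variables (R : realType) (M K : nat) (H : 'M[R[i]]_(M, K)) (P N0 : R).
Variables (r : 'I_K -> R) (rG : R).
Hypothesis r_const : forall k, r k = rG.
Hypothesis rate_antitone : forall x (Y Y' : {set 'I_K}),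
  Y \subset Y' -> rateSINR H P N0 x Y' <= rateSINR H P N0 x Y.
Implicit Types (s : 'S_K) (u : 'I_K).

Local Notation sic_ok := (sic_ok H P N0 r).
Local Notation first_fail := (first_fail H P N0 r).

Lemma first_fail_le s : (first_fail s <= K)%N.
Proof. by rewrite -[leqRHS]size_enum_ord find_size. Qed.

Lemma sic_ok_before_first_fail s u : (u < first_fail s)%N -> sic_ok s u.
Proof. by move/(before_find u); rewrite nth_ord_enum => /negbFE. Qed.

Lemma sic_fails_at_first_fail s u :
  nat_of_ord u = first_fail s -> ~~ sic_ok s u.
Proof.
move=> u_ff; have has_fail : has (fun v => ~~ sic_ok s v) (enum 'I_K).
  by rewrite has_find size_enum_ord -/(first_fail s) -u_ff ltn_ord.
by have := nth_find u has_fail; rewrite -/(first_fail s) -u_ff nth_ord_enum.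
Qed.

Lemma greedy_first_fail_max s s' : greedy_order H P N0 s ->
  (first_fail s' <= first_fail s)%N.
Proof.
move=> greedy; rewrite leqNgt; apply/negP => lt_ff.
pose u := Ordinal (leq_trans lt_ff (first_fail_le s')).
have [l [le_lu l_undecoded sub_U]] := first_undecoded s s' u.
have s'_ok := sic_ok_before_first_fail (leq_ltn_trans le_lu lt_ff).
have better_at_u := greedy u (s' l) l_undecoded.
have less_interference := rate_antitone (s' l) (setSD [set s' l] sub_U).
have /negP := sic_fails_at_first_fail (erefl : nat_of_ord u = _); apply.
move: s'_ok; rewrite /sic_ok !Tset_Uset !r_const => s'_ok.
exact: le_trans s'_ok (le_trans less_interference better_at_u).
Qed.

End GreedySIC.

Theorem mainTheorem2 (R : realType) (M K : nat) (hM : (0 < M)%N) (hK : (0 < K)%N)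
  (H : 'M[R[i]]_(M, K)) (P N0 : R) (hP : 0 < P) (hN0 : 0 < N0)
  (r : 'I_K -> R) (rG : R) (hr : forall k, r k = rG)
  (s : 'S_K) (hs : greedy_order H P N0 s) :
  forall s' : 'S_K, (#|S_SIC H P N0 r s'| <= #|S_SIC H P N0 r s|)%N.
Proof.
move=> s'; apply: leq_card_decoded.
have rate_antitone x Y Y' := @rateSINR_antitone _ _ _ H _ _ x Y Y' hP hN0.
exact: (greedy_first_fail_max hr rate_antitone s' hs).
Qed.
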